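(* Let $\mathbf a=(a_1,\dots,a_n)$ with all $a_i\ge0$, and on $\mathfrak H^{2n+1}=\mathbb R^{2n+1}$ let $\xi_{\mathbf a}$ be the Reeb vector field of the contact form $\eta_{\mathbf a}=\big(dz-\sum_iy_idx_i\big)/\big(1+\sum_ia_i(x_i^2+y_i^2)\big)$. Then the flow of $\xi_{\mathbf a}$ generates a free proper action $\mathcal A$ of $\mathbb R$ on $\mathfrak H^{2n+1}$, and the quotient space $\mathfrak H^{2n+1}/\mathcal A(\mathbb R)$, with the complex structure induced from the transverse complex structure $J$, is biholomorphic to $\mathbb C^n$.
   Context: Coordinates on $\mathbb R^{2n+1}$ are $(x_1,\dots,x_n,y_1,\dots,y_n,z)$. The CR structure is $\mathcal D=\ker\eta_{\mathbf a}=\ker(dz-\sum_iy_idx_i)$ with $J(\partial_{y_i})=\partial_{x_i}+y_i\partial_z$, $J(\partial_{x_i}+y_i\partial_z)=-\partial_{y_i}$; $\xi_{\mathbf a}$ is determined by $\eta_{\mathbf a}(\xi_{\mathbf a})=1$, $\iota_{\xi_{\mathbf a}}d\eta_{\mathbf a}=0$, and it is an infinitesimal CR transformation, so $J$ descends to an almost complex structure on the orbit space. *)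

From HB Require Import structures.
From mathcomp Require Import all_boot all_order all_algebra.
From mathcomp Require Import all_classical all_reals all_analysis.
Set Implicit Arguments. Unset Strict Implicit. Unset Printing Implicit Defensive.
Import Order.TTheory GRing.Theory Num.Theory.
Import numFieldNormedType.Exports.
Local Open Scope classical_set_scope.
Local Open Scope ring_scope.

Section Heis.
Variable R : realType.

Fixpoint Ck (m k : nat) (j : nat) (f : 'rV[R]_m -> 'rV[R]_k) : Prop :=
  match j with
  | 0 => continuous f
  | j.+1 => (forall x, differentiable f x) /\ forall v, Ck j (fun x => 'D_v f x)
  end.
Definition smooth (m k : nat) (f : 'rV[R]_m -> 'rV[R]_k) := forall j, Ck j f.

Variable n : nat.
(* H^{2n+1} = R^{2n+1}, coordinates (x_1..x_n, y_1..y_n, z) *)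
Definition Hpt := 'rV[R]_(n + n + 1).
Definition xc (i : 'I_n) : 'I_(n + n + 1) := lshift 1 (lshift n i).
Definition yc (i : 'I_n) : 'I_(n + n + 1) := lshift 1 (rshift n i).
Definition zc : 'I_(n + n + 1) := rshift (n + n) (@ord0 0).
Definition cx (p : Hpt) i := p ord0 (xc i).
Definition cy (p : Hpt) i := p ord0 (yc i).
Definition cz (p : Hpt) := p ord0 zc.

Definition eta_a (a : 'I_n -> R) (p v : Hpt) : R :=
  (cz v - \sum_i cy p i * cx v i) /
  (1 + \sum_i a i * (cx p i ^+ 2 + cy p i ^+ 2)).

(* exterior derivative of the 1-form eta_a, on (constant) vectors u v *)
Definition deta_a (a : 'I_n -> R) (p u v : Hpt) : R :=
  'D_u (fun q => eta_a a q v) p - 'D_v (fun q => eta_a a q u) p.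

Definition is_Reeb (a : 'I_n -> R) (xi : Hpt -> Hpt) : Prop :=
  forall p, eta_a a p (xi p) = 1 /\ forall v, deta_a a p (xi p) v = 0.

Definition inD (p v : Hpt) : Prop := cz v - \sum_i cy p i * cx v i = 0.

(* J on D_p: J(d/dy_i) = d/dx_i + y_i d/dz, J(d/dx_i + y_i d/dz) = - d/dy_i.
   For v = sum_i v_{x_i} (d/dx_i + y_i d/dz) + v_{y_i} d/dy_i in D_p,
   J v = sum_i v_{y_i} (d/dx_i + y_i d/dz) - v_{x_i} d/dy_i. *)
Definition Jmap (p v : Hpt) : Hpt :=
  row_mx (row_mx (\row_i cy v i) (\row_i (- cx v i)))
         (\row_(j < 1) \sum_i cy p i * cy v i).

(* standard complex structure on C^n = R^n (+) R^n, (u, w) <-> u + i w *)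
Definition Jstd (w : 'rV[R]_(n + n)) : 'rV[R]_(n + n) :=
  row_mx (- rsubmx w) (lsubmx w).

Definition is_flow_of (xi : Hpt -> Hpt) (phi : R -> Hpt -> Hpt) : Prop :=
  (forall p, phi 0 p = p) /\
  (forall (t : R) p, is_derive (t : R^o) (1 : R^o) (fun s : R^o => phi s p) (xi (phi t p))).

Definition is_action (phi : R -> Hpt -> Hpt) : Prop :=
  (forall p, phi 0 p = p) /\ (forall s t p, phi (s + t) p = phi s (phi t p)) /\
  continuous (fun tp : R * Hpt => phi tp.1 tp.2) /\ (forall t, smooth (phi t)).

Definition free_action (phi : R -> Hpt -> Hpt) : Prop :=
  forall t p, phi t p = p -> t = 0.

Definition proper_action (phi : R -> Hpt -> Hpt) : Prop :=
  forall K : set (Hpt * Hpt), compact K ->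
    compact ((fun tp : R * Hpt => (phi tp.1 tp.2, tp.2)) @^-1` K).

(* The orbit space H/A(R), with its induced complex structure, is biholomorphic
   to C^n: realised by a smooth surjective submersion pi : H -> C^n whose fibres
   are exactly the orbits, and whose differential is complex linear from (D, J)
   to (C^n, i). *)
Definition quotient_biholo_Cn (phi : R -> Hpt -> Hpt) : Prop :=
  exists pi : Hpt -> 'rV[R]_(n + n),
    [/\ smooth pi,
        (forall w, exists p, pi p = w),
        (forall p q, pi p = pi q <-> exists t, q = phi t p),
        (forall p w, exists v, 'D_v pi p = w) &
        (forall p v, inD p v -> 'D_(Jmap p v) pi p = Jstd ('D_v pi p))].

End Heis.

From HB Require Import structures.
From mathcomp Require Import all_boot all_order all_algebra.
From mathcomp Require Import all_classical all_reals all_analysis.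
From mathcomp Require Import ring.
Set Implicit Arguments. Unset Strict Implicit. Unset Printing Implicit Defensive.
Import Order.TTheory GRing.Theory Num.Theory.
Import numFieldNormedType.Exports.
Local Open Scope classical_set_scope.
Local Open Scope ring_scope.

(* The Reeb equations eta_a(xi) = 1, d eta_a(xi, .) = 0 force
     xi = sum_i 2 a_i (x_i d/dy_i - y_i d/dx_i) + (1 + sum_i a_i (x_i^2 - y_i^2)) d/dz.
   Its flow rotates each plane (x_i, y_i) with angular speed 2 a_i and translates
   w = z - (sum_i x_i y_i) / 2 at unit speed; w is thus a global time function,
   which makes the action free and proper.  The map
     pi_i = e^(a_i |p|^2 / 2) e^(2 i a_i w) (x_i - i y_i)
   is constant on orbits.  It separates them: |pi_i|^2 = (x_i^2 + y_i^2) e^(a_i |p|^2)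
   determines |p|^2 by monotonicity, hence each (x_i, y_i) up to the rotation by
   the flow.  It is onto by an intermediate value argument on |p|^2, and its
   differential is onto and complex linear from (D, J) to C^n by computation. *)

Lemma split_lshift m n (j : 'I_m) : fintype.split (lshift n j) = inl j.
Proof. exact: (unsplitK (inl _ j)). Qed.
Lemma split_rshift m n (k : 'I_n) : fintype.split (rshift m k) = inr k.
Proof. exact: (unsplitK (inr _ k)). Qed.

Lemma sum_mul_eq1 (R : pzSemiRingType) (I : finType) (F : I -> R) k :
  \sum_i F i * (i == k)%:R = F k.
Proof.
rewrite (bigD1 k) //= eqxx mulr1 big1 ?addr0 // => i /negbTE ->.
by rewrite mulr0.
Qed.

Lemma continuous_row (R : realType) (T : topologicalType) k (F : T -> 'rV[R]_k) :
  (forall j, continuous (fun x => F x ord0 j)) -> continuous F.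
Proof.
move=> H.
have -> : F = \sum_(j < k) (fun x => F x ord0 j *: (delta_mx 0 j : 'rV[R]_k)).
  by apply: funext => x; rewrite fct_sumE [LHS]row_sum_delta.
move=> x; elim/big_ind: _ => //.
- exact: cst_continuous.
- by move=> f g hf hg; apply: continuousD.
- by move=> j _; apply: continuousZr_tmp; exact: H.
Qed.

Lemma is_derive_line (R : realType) (V W : normedModType R) (F : V -> W) x0 v (t : R) :
  derivable F (x0 + t *: v) v ->
  is_derive (t : R^o) (1 : R^o) (fun s : R^o => F (x0 + s *: v)) ('D_v F (x0 + t *: v)).
Proof.
move=> hd.
have E : (fun h : R => h^-1 *: ((fun s : R^o => F (x0 + s *: v)) (h *: (1 : R^o) + t) -
             F (x0 + t *: v))) =
         (fun h : R => h^-1 *: (F (h *: v + (x0 + t *: v)) - F (x0 + t *: v))).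
  apply: funext => h /=; congr (_ *: (F _ - _)).
  by rewrite [h *: 1]mulr1 scalerDl addrCA addrC.
by split; [rewrite /derivable /= E | rewrite /derive /= E].
Qed.

Lemma continuous_bounded_on_compact (R : realType) (T : topologicalType)
    (f : T -> R) (K : set T) :
  continuous f -> compact K -> exists M : R, forall x, K x -> `|f x| <= M.
Proof.
move=> fc cK.
have /compact_bounded [M [_ HM]] : compact (f @` K).
  by apply: continuous_compact => //; apply: continuous_subspaceT => x; exact: fc.
by exists (M + 1) => x Kx; apply: (HM (M + 1)); rewrite ?ltrDl //; exists x.
Qed.

Section Rotation.
Variable R : comPzRingType.
Variables (x y C S : R).
Hypothesis CS1 : C ^+ 2 + S ^+ 2 = 1.

Lemma rotate_norm2 : (x * C - y * S) ^+ 2 + (x * S + y * C) ^+ 2 = x ^+ 2 + y ^+ 2.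
Proof. by rewrite -[RHS]mulr1 -CS1; ring. Qed.

Lemma rotate_re (c s : R) :
  (x * C - y * S) * (c * C - s * S) + (x * S + y * C) * (s * C + c * S) = x * c + y * s.
Proof. by rewrite -[RHS]mulr1 -CS1; ring. Qed.

Lemma rotate_im (c s : R) :
  (x * C - y * S) * (s * C + c * S) - (x * S + y * C) * (c * C - s * S) = x * s - y * c.
Proof. by rewrite -[RHS]mulr1 -CS1; ring. Qed.

End Rotation.

Lemma rotate_back (R : realType) (x y x' y' al al' : R) :
  x * cos al + y * sin al = x' * cos al' + y' * sin al' ->
  x * sin al - y * cos al = x' * sin al' - y' * cos al' ->
  x' = x * cos (al' - al) - y * sin (al' - al) /\
  y' = x * sin (al' - al) + y * cos (al' - al).
Proof.
move=> hre him; have hcs := cos2Dsin2 al'; rewrite cosB sinB.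
split; [rewrite -[x']mulr1 -hcs | rewrite -[y']mulr1 -hcs].
- transitivity ((x' * cos al' + y' * sin al') * cos al'
                + (x' * sin al' - y' * cos al') * sin al'); first by ring.
  by rewrite -hre -him; ring.
- transitivity ((x' * cos al' + y' * sin al') * sin al'
                - (x' * sin al' - y' * cos al') * cos al'); first by ring.
  by rewrite -hre -him; ring.
Qed.

Lemma exists_fixpoint_sum_expR (R : realType) k (b c : 'I_k -> R) :
  (forall i, 0 <= b i) -> (forall i, 0 <= c i) ->
  exists S : R, S = \sum_i c i * expR (- (b i * S)).
Proof.
move=> b_ge0 c_ge0; pose f S := S - \sum_i c i * expR (- (b i * S)).
have fc : continuous f.
  move=> x; apply: continuousB; first exact: cvg_id.
  have -> : (fun S : R => \sum_i c i * expR (- (b i * S))) =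
      \sum_i (fun S : R => c i * expR (- (b i * S))) by rewrite fct_sumE.
  elim/big_ind: _ => [|g h hg hh|i _]; first exact: cst_continuous.
    exact: continuousD.
  apply: continuousM; first exact: cst_continuous.
  apply: continuous_comp; last exact: continuous_expR.
  by apply/continuousN/continuousM; [exact: cst_continuous | exact: cvg_id].
have C0 : 0 <= \sum_i c i by apply: sumr_ge0.
have f0 : f 0 <= 0.
  by rewrite /f sub0r oppr_le0; apply: sumr_ge0 => i _; rewrite mulr_ge0 ?expR_ge0.
have fC : 0 <= f (\sum_i c i).
  rewrite /f subr_ge0; apply: ler_sum => i _; apply: ler_piMr => //.
  by rewrite expR_le1 oppr_le0 mulr_ge0.
have [S _ /eqP] := @IVT R f 0 (\sum_i c i) 0 C0
  (continuous_subspaceT (fun x => fc x)) (ltac:(by rewrite ge_min f0 le_max fC orbT)).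
by rewrite subr_eq0 => /eqP; exists S.
Qed.

(* Smoothness is obtained by reflection: the maps below are evaluations of
   terms of a small expression language that is closed under directional
   derivatives, so every iterated derivative exists and is again such a map. *)
Section SmoothExpr.
Variables (R : realType) (m : nat).
Local Notation V := 'rV[R]_m.

Inductive sexpr : Type :=
| SConst of R | SCoord of 'I_m | SAdd of sexpr & sexpr | SMul of sexpr & sexpr
| SSin of sexpr | SCos of sexpr | SExp of sexpr | SSum (k : nat) of ('I_k -> sexpr).

Fixpoint seval (e : sexpr) (x : V) : R :=
  match e with
  | SConst c => c
  | SCoord i => x ord0 i
  | SAdd e1 e2 => seval e1 x + seval e2 x
  | SMul e1 e2 => seval e1 x * seval e2 x
  | SSin e => sin (seval e x)
  | SCos e => cos (seval e x)
  | SExp e => expR (seval e x)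
  | SSum k F => \sum_(i < k) seval (F i) x
  end.

Fixpoint sderiv (v : V) (e : sexpr) : sexpr :=
  match e with
  | SConst _ => SConst 0
  | SCoord i => SConst (v ord0 i)
  | SAdd e1 e2 => SAdd (sderiv v e1) (sderiv v e2)
  | SMul e1 e2 => SAdd (SMul (sderiv v e1) e2) (SMul e1 (sderiv v e2))
  | SSin e => SMul (SCos e) (sderiv v e)
  | SCos e => SMul (SConst (-1)) (SMul (SSin e) (sderiv v e))
  | SExp e => SMul (SExp e) (sderiv v e)
  | SSum k F => SSum (fun i => sderiv v (F i))
  end.

Lemma derive_comp_scalar (g : R -> R) (f : V -> R) x v (dg : R) :
  differentiable f x -> is_derive (f x) 1 g dg ->
  differentiable (g \o f) x /\ 'D_v (g \o f) x = 'D_v f x * dg.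
Proof.
move=> df hg.
have dgd : differentiable g (f x) by apply/derivable1_diffP; case: hg.
have dc : differentiable (g \o f) x by apply: differentiable_comp.
split => //.
rewrite deriveE // diff_comp // /= deriv1E //.
by rewrite derive1E (@derive_val _ _ _ _ _ _ _ hg) /= deriveE.
Qed.

Lemma seval_diff_derive e x :
  differentiable (seval e) x /\ forall v, 'D_v (seval e) x = seval (sderiv v e) x.
Proof.
elim: e x => /=.
- move=> c x; split; [exact: differentiable_cst | move=> v; exact: derive_cst].
- move=> i x; split; first exact: differentiable_coord.
  move=> v; have := congr1 (fun M : V => M ord0 i) (derive_mx (@derivable_id _ _ x v)).
  by rewrite /= mxE derive_id => <-.
- move=> e1 IH1 e2 IH2 x; have [d1 D1] := IH1 x; have [d2 D2] := IH2 x.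
  rewrite -[fun x => _ + _]/(seval e1 + seval e2).
  split; first exact: differentiableD.
  by move=> v; rewrite deriveD ?D1 ?D2 //; exact: diff_derivable.
- move=> e1 IH1 e2 IH2 x; have [d1 D1] := IH1 x; have [d2 D2] := IH2 x.
  rewrite -[fun x => _ * _]/(seval e1 * seval e2).
  split; first exact: differentiableM.
  move=> v; rewrite deriveM ?D1 ?D2 /=; try exact: diff_derivable.
  by rewrite /GRing.scale /= addrC [seval e2 x * _]mulrC.
- move=> e IH x; have [d D] := IH x.
  have := derive_comp_scalar _ d (is_derive_sin (seval e x)).
  move=> H; split; first exact: (H 0).1.
  by move=> v; rewrite -[fun x => _]/(sin \o seval e) (H v).2 D mulrC.
- move=> e IH x; have [d D] := IH x.
  have := derive_comp_scalar _ d (is_derive_cos (seval e x)).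
  move=> H; split; first exact: (H 0).1.
  by move=> v; rewrite -[fun x => _]/(cos \o seval e) (H v).2 D /=; ring.
- move=> e IH x; have [d D] := IH x.
  have := derive_comp_scalar _ d (is_derive_expR (seval e x)).
  move=> H; split; first exact: (H 0).1.
  by move=> v; rewrite -[fun x => _]/(expR \o seval e) (H v).2 D mulrC.
- move=> k F IH x.
  have -> : (fun x => \sum_(i < k) seval (F i) x) = \sum_(i < k) seval (F i).
    by apply: funext => y; rewrite fct_sumE.
  split; first by apply: differentiable_sum => i; exact: (IH i x).1.
  move=> v; rewrite derive_sum; last by move=> i; exact/diff_derivable/(IH i x).1.
  by apply: eq_bigr => i _; exact: (IH i x).2.
Qed.

Lemma differentiable_seval e x : differentiable (seval e) x.
Proof. exact: (seval_diff_derive e x).1. Qed.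

Lemma derive_seval e v x : 'D_v (seval e) x = seval (sderiv v e) x.
Proof. exact: (seval_diff_derive e x).2. Qed.

Lemma continuous_seval e : continuous (seval e).
Proof. by move=> x; apply: differentiable_continuous; exact: differentiable_seval. Qed.

Definition svec k (E : 'I_k -> sexpr) (x : V) : 'rV[R]_k := \row_j seval (E j) x.

Lemma differentiable_svec k (E : 'I_k -> sexpr) x : differentiable (svec E) x.
Proof.
have -> : svec E = \sum_(j < k) (fun x => seval (E j) x *: (delta_mx 0 j : 'rV[R]_k)).
  apply: funext => y; rewrite fct_sumE [LHS]row_sum_delta.
  by apply: eq_bigr => j _; rewrite mxE.
apply: differentiable_sum => j.
by apply: differentiableZl; exact: differentiable_seval.
Qed.

Lemma derive_svec k (E : 'I_k -> sexpr) v x :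
  'D_v (svec E) x = svec (fun j => sderiv v (E j)) x.
Proof.
rewrite derive_mx; last exact/diff_derivable/differentiable_svec.
apply/matrixP => i j; rewrite !mxE.
have -> : (fun y => svec E y i j) = seval (E j) by apply: funext => y; rewrite mxE.
exact: derive_seval.
Qed.

Lemma smooth_svec k (E : 'I_k -> sexpr) : smooth (svec E).
Proof.
move=> j; elim: j k E => [|j IH] k E /=.
  by move=> x; apply: differentiable_continuous; exact: differentiable_svec.
split=> [x|v]; first exact: differentiable_svec.
have -> : (fun x => 'D_v (svec E) x) = svec (fun j => sderiv v (E j)).
  by apply: funext => x; rewrite derive_svec.
exact: IH.
Qed.

End SmoothExpr.
Arguments SConst {R m}. Arguments SCoord {R m}. Arguments SAdd {R m}.
Arguments SMul {R m}. Arguments SSin {R m}. Arguments SCos {R m}.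
Arguments SExp {R m}. Arguments SSum {R m k}.

Section Substitution.
Variables (R : realType) (m m' : nat) (s : 'I_m -> sexpr R m').

Fixpoint ssubst (e : sexpr R m) : sexpr R m' :=
  match e with
  | SConst c => SConst c
  | SCoord i => s i
  | SAdd e1 e2 => SAdd (ssubst e1) (ssubst e2)
  | SMul e1 e2 => SMul (ssubst e1) (ssubst e2)
  | SSin e => SSin (ssubst e)
  | SCos e => SCos (ssubst e)
  | SExp e => SExp (ssubst e)
  | SSum k F => SSum (fun i => ssubst (F i))
  end.

Lemma seval_subst e x : seval (ssubst e) x = seval e (svec s x).
Proof.
elim: e => //= [i|e1 -> e2 ->|e1 -> e2 ->|e ->|e ->|e ->|k F IH] //; first by rewrite mxE.
by apply: eq_bigr => i _; rewrite IH.
Qed.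

End Substitution.

Section Coordinates.
Variables (R : realType) (n : nat).
Local Notation H := (Hpt R n).

Definition hpt (X Y : 'I_n -> R) (Z : R) : H :=
  row_mx (row_mx (\row_i X i) (\row_i Y i)) (\row_(j < 1) Z).

Lemma cx_hpt X Y Z i : cx (hpt X Y Z) i = X i.
Proof. by rewrite /cx /xc /hpt row_mxEl row_mxEl mxE. Qed.
Lemma cy_hpt X Y Z i : cy (hpt X Y Z) i = Y i.
Proof. by rewrite /cy /yc /hpt row_mxEl row_mxEr mxE. Qed.
Lemma cz_hpt X Y Z : cz (hpt X Y Z) = Z.
Proof. by rewrite /cz /zc /hpt row_mxEr mxE. Qed.

Lemma cx_hptE X Y Z : cx (hpt X Y Z) = X.
Proof. by apply: funext => i; rewrite cx_hpt. Qed.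
Lemma cy_hptE X Y Z : cy (hpt X Y Z) = Y.
Proof. by apply: funext => i; rewrite cy_hpt. Qed.

Lemma hptP (p q : H) : (forall i, cx p i = cx q i) -> (forall i, cy p i = cy q i) ->
  cz p = cz q -> p = q.
Proof.
move=> hx hy hz; apply/matrixP => i j; rewrite (ord1 i).
case: (split_ordP j) => j1 ->; last by rewrite (ord1 j1); exact: hz.
by case: (split_ordP j1) => j2 ->; [exact: hx | exact: hy].
Qed.

End Coordinates.

Section ReebField.
Variables (R : realType) (n : nat) (a : 'I_n -> R).
Hypothesis a_ge0 : forall i, 0 <= a i.
Local Notation H := (Hpt R n).

Definition theta0 (p v : H) := cz v - \sum_i cy p i * cx v i.
Definition eta_den (p : H) := 1 + \sum_i a i * (cx p i ^+ 2 + cy p i ^+ 2).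
Definition eta_den_diff (p u : H) :=
  \sum_i a i * (2 * cx p i * cx u i + 2 * cy p i * cy u i).

Lemma eta_den_gt0 p : 0 < eta_den p.
Proof.
apply: (lt_le_trans ltr01); rewrite lerDl; apply: sumr_ge0 => i _.
by apply: mulr_ge0 => //; rewrite addr_ge0 ?sqr_ge0.
Qed.

Lemma eta_den_neq0 p : eta_den p != 0.
Proof. by rewrite gt_eqF ?eta_den_gt0. Qed.

Definition theta0_expr (v : H) : sexpr R (n + n + 1) :=
  SAdd (SConst (cz v)) (SSum (fun i => SMul (SConst (- cx v i)) (SCoord (yc i)))).
Definition eta_den_expr : sexpr R (n + n + 1) :=
  SAdd (SConst 1) (SSum (fun i => SMul (SConst (a i))
     (SAdd (SMul (SCoord (xc i)) (SCoord (xc i))) (SMul (SCoord (yc i)) (SCoord (yc i)))))).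

Lemma seval_theta0 v p : seval (theta0_expr v) p = theta0 p v.
Proof.
rewrite /= /theta0 -sumrN; congr (_ + _); apply: eq_bigr => i _.
by rewrite /cy mulNr mulrC.
Qed.

Lemma seval_eta_den p : seval eta_den_expr p = eta_den p.
Proof. by []. Qed.

Lemma derive_eta_a u v p :
  'D_u (fun q => eta_a a q v) p =
  (- \sum_i cy u i * cx v i) / eta_den p - theta0 p v * eta_den_diff p u / eta_den p ^+ 2.
Proof.
have -> : (fun q => eta_a a q v) =
    seval (theta0_expr v) * (fun q => (seval eta_den_expr q)^-1).
  apply: funext => q.
  by rewrite -[eta_a a q v]/(theta0 q v / eta_den q) -seval_theta0 -seval_eta_den.
have hf0 : seval eta_den_expr p != 0 by rewrite seval_eta_den eta_den_neq0.
rewrite deriveM; [|exact/diff_derivable/differentiable_seval|];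
  last exact/derivableV/diff_derivable/differentiable_seval.
rewrite deriveV //; last exact/diff_derivable/differentiable_seval.
rewrite !derive_seval seval_theta0 seval_eta_den -![_ *: _]/(_ * _).
have -> : seval (sderiv u (theta0_expr v)) p = - \sum_i cy u i * cx v i.
  rewrite /= add0r -sumrN; apply: eq_bigr => i _.
  by rewrite mul0r add0r /cy mulNr mulrC.
have -> : seval (sderiv u eta_den_expr) p = eta_den_diff p u.
  rewrite /= add0r /eta_den_diff; apply: eq_bigr => i _.
  by rewrite mul0r add0r /cx /cy; ring.
by field; rewrite eta_den_neq0.
Qed.

(* The hypothesis says [eta_a a p v0 = 1]. *)
Lemma deta_a_contract p v0 u : theta0 p v0 = eta_den p ->
  deta_a a p v0 u * eta_den p =
  \sum_i (cy u i * cx v0 i - cy v0 i * cx u i) + eta_den_diff p u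
  - theta0 p u * eta_den_diff p v0 / eta_den p.
Proof.
move=> h; rewrite /deta_a !derive_eta_a h sumrB.
by field; rewrite eta_den_neq0.
Qed.

Definition Reeb_field (p : H) : H :=
  hpt (fun i => - (2 * a i * cy p i)) (fun i => 2 * a i * cx p i)
      (1 + \sum_i a i * (cx p i ^+ 2 - cy p i ^+ 2)).

Lemma is_Reeb_field xi : is_Reeb a xi -> forall p, xi p = Reeb_field p.
Proof.
move=> hxi p; have [h1 h2] := hxi p; set v0 := xi p in h1 h2 *.
have hth : theta0 p v0 = eta_den p.
  rewrite -[LHS](divfK (eta_den_neq0 p)) -[theta0 p v0 / _]/(eta_a a p v0).
  by rewrite h1 mul1r.
pose D := eta_den_diff p v0.
(* [d eta_a (v0, u) = 0] for [u = hpt X Y Z]; the coordinate vectors then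
   give the coordinates of [v0] one at a time. *)
have hD X Y Z : \sum_i (Y i * cx v0 i - cy v0 i * X i
                        + a i * (2 * cx p i * X i + 2 * cy p i * Y i))
                - (Z - \sum_i cy p i * X i) * D / eta_den p = 0.
  have := deta_a_contract (hpt X Y Z) hth; rewrite h2 mul0r => /esym.
  rewrite /theta0 /eta_den_diff cz_hpt.
  by rewrite cx_hptE cy_hptE -big_split /= -mulrA.
have hD0 : D = 0.
  have := hD (fun=> 0) (fun=> 0) 1.
  rewrite !big1 => [|i _|i _]; rewrite ?mulr0 ?mul0r //; last by ring.
  rewrite sub0r subr0 mul1r => /eqP.
  by rewrite oppr_eq0 mulf_eq0 invr_eq0 (negbTE (eta_den_neq0 p)) orbF => /eqP.
have hx k : cx v0 k = - (2 * a k * cy p k).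
  have := hD (fun=> 0) (fun i => (i == k)%:R) 0.
  rewrite hD0 mulr0 mul0r subr0.
  rewrite (eq_bigr (fun i => (cx v0 i + 2 * a i * cy p i) * (i == k)%:R)) => [|i _];
    last by ring.
  by rewrite sum_mul_eq1 => h; apply/eqP; rewrite -subr_eq0 opprK h.
have hy k : cy v0 k = 2 * a k * cx p k.
  have := hD (fun i => (i == k)%:R) (fun=> 0) 0.
  rewrite hD0 mulr0 mul0r subr0.
  rewrite (eq_bigr (fun i => (2 * a i * cx p i - cy v0 i) * (i == k)%:R)) => [|i _];
    last by ring.
  by rewrite sum_mul_eq1 => h; apply/eqP; rewrite eq_sym -subr_eq0 h.
apply: hptP => [i|i|]; rewrite ?cx_hpt ?cy_hpt ?hx ?hy // cz_hpt.
rewrite -[cz v0](subrK (\sum_i cy p i * cx v0 i)) -/(theta0 p v0) hth /eta_den.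
rewrite -addrA -big_split; congr (1 + _); apply: eq_bigr => i _ /=.
by rewrite hx; ring.
Qed.

End ReebField.

Section Flow.
Variables (R : realType) (n : nat) (a : 'I_n -> R).
Local Notation H := (Hpt R n).

Definition wcoord (p : H) := cz p - (\sum_i cx p i * cy p i) / 2.
Definition rot_x (p : H) i t := cx p i * cos (2 * a i * t) - cy p i * sin (2 * a i * t).
Definition rot_y (p : H) i t := cx p i * sin (2 * a i * t) + cy p i * cos (2 * a i * t).

Definition flow (t : R) (p : H) : H :=
  hpt (rot_x p ^~ t) (rot_y p ^~ t)
      (wcoord p + t + (\sum_i rot_x p i t * rot_y p i t) / 2).

Lemma cx_flow t p : cx (flow t p) = rot_x p ^~ t.
Proof. exact: cx_hptE. Qed.
Lemma cy_flow t p : cy (flow t p) = rot_y p ^~ t.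
Proof. exact: cy_hptE. Qed.

Lemma wcoord_flow t p : wcoord (flow t p) = wcoord p + t.
Proof. by rewrite {1}/wcoord cz_hpt cx_hptE cy_hptE /=; ring. Qed.

Lemma flow0 p : flow 0 p = p.
Proof.
have rot0 i : rot_x p i 0 = cx p i /\ rot_y p i 0 = cy p i.
  by rewrite /rot_x /rot_y mulr0 cos0 sin0; split; ring.
apply: hptP => [i|i|]; rewrite ?cx_flow ?cy_flow; first exact: (rot0 i).1.
  exact: (rot0 i).2.
rewrite cz_hpt addr0 (eq_bigr (fun i => cx p i * cy p i)) => [|i _]; last first.
  by rewrite (rot0 i).1 (rot0 i).2.
by rewrite /wcoord subrK.
Qed.

Lemma rot_flow s t p i :
  rot_x (flow t p) i s = rot_x p i (s + t) /\ rot_y (flow t p) i s = rot_y p i (s + t).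
Proof.
by rewrite /rot_x /rot_y cx_flow cy_flow /rot_x /rot_y mulrDr cosD sinD; split; ring.
Qed.

Lemma flowD s t p : flow (s + t) p = flow s (flow t p).
Proof.
apply: hptP => [i|i|]; rewrite ?cx_flow ?cy_flow; first exact/esym/(rot_flow s t p i).1.
  exact/esym/(rot_flow s t p i).2.
rewrite !cz_hpt wcoord_flow.
under [in RHS]eq_bigr do rewrite (rot_flow s t p _).1 (rot_flow s t p _).2.
ring.
Qed.

Lemma flow_free t p : flow t p = p -> t = 0.
Proof.
move=> h; have := wcoord_flow t p; rewrite h => /eqP.
by rewrite addrC -subr_eq subrr => /eqP.
Qed.

End Flow.

Section FlowSmooth.
Variables (R : realType) (n : nat) (a : 'I_n -> R).
Local Notation N := (n + n + 1)%N.
Local Notation M := (1 + (n + n + 1))%N.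
Local Notation H := (Hpt R n).

(* The flow is reflected as a map on [R^(1 + (2n + 1))], time coordinate first. *)
Definition t_idx : 'I_M := lshift N ord0.
Definition p_idx (k : 'I_N) : 'I_M := rshift 1 k.
Definition tpt (t : R) (p : H) : 'rV[R]_M := row_mx (\row_(j < 1) t) p.
Definition time_dir : 'rV[R]_M := row_mx (\row_(j < 1) 1) 0.

Lemma tpt_t t p : tpt t p ord0 t_idx = t.
Proof. by rewrite /tpt /t_idx row_mxEl mxE. Qed.
Lemma tpt_p t p k : tpt t p ord0 (p_idx k) = p ord0 k.
Proof. by rewrite /tpt /p_idx row_mxEr. Qed.
Lemma time_dir_t : time_dir ord0 t_idx = 1.
Proof. by rewrite /time_dir /t_idx row_mxEl mxE. Qed.
Lemma time_dir_p k : time_dir ord0 (p_idx k) = 0.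
Proof. by rewrite /time_dir /p_idx row_mxEr mxE. Qed.

Lemma tpt_line t p : tpt t p = tpt 0 p + t *: time_dir.
Proof.
rewrite /tpt /time_dir scale_row_mx add_row_mx scaler0 addr0; congr row_mx.
by apply/matrixP => i j; rewrite !mxE; ring.
Qed.

Definition angle_expr i : sexpr R M := SMul (SConst (2 * a i)) (SCoord t_idx).
(* Locked so that [/=] does not unfold them inside [seval]. *)
Definition rot_x_expr i : sexpr R M := locked
  (SAdd (SMul (SCoord (p_idx (xc i))) (SCos (angle_expr i)))
       (SMul (SConst (-1)) (SMul (SCoord (p_idx (yc i))) (SSin (angle_expr i))))).
Definition rot_y_expr i : sexpr R M := locked
  (SAdd (SMul (SCoord (p_idx (xc i))) (SSin (angle_expr i)))
        (SMul (SCoord (p_idx (yc i))) (SCos (angle_expr i)))).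
Lemma rot_x_exprE : rot_x_expr = fun i =>
  SAdd (SMul (SCoord (p_idx (xc i))) (SCos (angle_expr i)))
       (SMul (SConst (-1)) (SMul (SCoord (p_idx (yc i))) (SSin (angle_expr i)))).
Proof. by apply: funext => i; rewrite /rot_x_expr -lock. Qed.
Lemma rot_y_exprE : rot_y_expr = fun i =>
  SAdd (SMul (SCoord (p_idx (xc i))) (SSin (angle_expr i)))
       (SMul (SCoord (p_idx (yc i))) (SCos (angle_expr i))).
Proof. by apply: funext => i; rewrite /rot_y_expr -lock. Qed.

Definition flow_z_expr : sexpr R M :=
  SAdd (SAdd (SCoord (p_idx (zc n))) (SMul (SConst (- (1 / 2)))
          (SSum (fun i => SMul (SCoord (p_idx (xc i))) (SCoord (p_idx (yc i)))))))
       (SAdd (SCoord t_idx) (SMul (SConst (1 / 2))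
          (SSum (fun i => SMul (rot_x_expr i) (rot_y_expr i))))).
Definition flow_expr (k : 'I_N) : sexpr R M :=
  match fintype.split k with
  | inl k1 => match fintype.split k1 with inl i => rot_x_expr i | inr i => rot_y_expr i end
  | inr _ => flow_z_expr
  end.

Lemma seval_rot_x i t p : seval (rot_x_expr i) (tpt t p) = rot_x a p i t.
Proof. by rewrite rot_x_exprE /= !tpt_p !tpt_t /rot_x /cx /cy; ring. Qed.
Lemma seval_rot_y i t p : seval (rot_y_expr i) (tpt t p) = rot_y a p i t.
Proof. by rewrite rot_y_exprE /= !tpt_p !tpt_t /rot_y /cx /cy. Qed.

Lemma flow_svec t p : flow a t p = svec flow_expr (tpt t p).
Proof.
apply: hptP => [i|i|]; rewrite /cx /cy /cz /svec mxE /flow_expr.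
- by rewrite /xc !split_lshift seval_rot_x -/(cx _ _) cx_flow.
- by rewrite /yc split_lshift split_rshift seval_rot_y -/(cy _ _) cy_flow.
rewrite /zc split_rshift -/(cz _) cz_hpt.
transitivity (cz p + - (1 / 2) * (\sum_i cx p i * cy p i)
              + (t + 1 / 2 * \sum_i rot_x a p i t * rot_y a p i t)).
  by rewrite /wcoord; ring.
rewrite /= tpt_t tpt_p; congr (_ + _ * _ + (_ + _ * _)); apply: eq_bigr => i _.
  by rewrite !tpt_p.
by rewrite seval_rot_x seval_rot_y.
Qed.

Lemma derive_flow_time t p :
  'D_time_dir (svec flow_expr) (tpt t p) = Reeb_field a (flow a t p).
Proof.
rewrite derive_svec; apply: hptP => [i|i|];
  rewrite /Reeb_field ?cx_hpt ?cy_hpt ?cz_hpt ?cx_flow ?cy_flow /=;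
  rewrite /cx /cy /cz /svec mxE /flow_expr.
- rewrite /xc !split_lshift rot_x_exprE [seval _ _]/=.
  by rewrite !time_dir_p !time_dir_t !tpt_p !tpt_t /rot_y /cx /cy; ring.
- rewrite /yc split_lshift split_rshift rot_y_exprE [seval _ _]/=.
  by rewrite !time_dir_p !time_dir_t !tpt_p !tpt_t /rot_x /cx /cy; ring.
rewrite /zc split_rshift /= rot_x_exprE rot_y_exprE /= !mul0r !add0r time_dir_t time_dir_p.
rewrite big1 => [|i _]; last by rewrite !time_dir_p; ring.
rewrite mulr0 !add0r mulr_sumr; congr (_ + _); apply: eq_bigr => i _.
by rewrite ?time_dir_p ?time_dir_t ?tpt_p ?tpt_t /rot_x /rot_y /cx /cy; field.
Qed.

Lemma flow_is_flow_of xi : (forall i, 0 <= a i) -> is_Reeb a xi -> is_flow_of xi (flow a).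
Proof.
move=> a_ge0 hxi; split=> [|t p]; first exact: flow0.
have -> : (fun s : R^o => flow a s p) =
    (fun s : R^o => svec flow_expr (tpt 0 p + s *: time_dir)).
  by apply: funext => s; rewrite -tpt_line flow_svec.
have := @is_derive_line R _ _ (svec flow_expr) (tpt 0 p) time_dir t.
rewrite -tpt_line derive_flow_time -(is_Reeb_field a_ge0 hxi); apply.
exact/diff_derivable/differentiable_svec.
Qed.

Definition time_subst (t : R) (k : 'I_M) : sexpr R N :=
  match fintype.split k with inl _ => SConst t | inr k' => SCoord k' end.

Lemma svec_time_subst t p : svec (time_subst t) p = tpt t p.
Proof.
apply/matrixP => i j; rewrite (ord1 i) mxE /time_subst /tpt.
case: (split_ordP j) => j' ->; rewrite ?split_lshift ?split_rshift /=.
  by rewrite row_mxEl mxE.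
by rewrite row_mxEr.
Qed.

Lemma smooth_flow t : smooth (flow a t).
Proof.
have -> : flow a t = svec (fun k => ssubst (time_subst t) (flow_expr k)).
  apply: funext => p; apply/matrixP => i j.
  by rewrite flow_svec !mxE seval_subst svec_time_subst.
exact: smooth_svec.
Qed.

Lemma continuous_flow : continuous (fun q : R * H => flow a q.1 q.2).
Proof.
have -> : (fun q : R * H => flow a q.1 q.2) = svec flow_expr \o (fun q => tpt q.1 q.2).
  by apply: funext => q; rewrite /= flow_svec.
move=> q; apply: continuous_comp; last exact/differentiable_continuous/differentiable_svec.
move: q; apply: continuous_row => j.
case: (split_ordP j) => j' ->.
  have -> : (fun x : R * H => tpt x.1 x.2 ord0 (lshift N j')) = fst.
    by apply: funext => x; rewrite /tpt row_mxEl mxE.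
  by move=> x; exact: cvg_fst.
have -> : (fun x : R * H => tpt x.1 x.2 ord0 (rshift 1 j')) = (fun q : H => q ord0 j') \o snd.
  by apply: funext => x; rewrite /tpt row_mxEr.
by move=> x; apply: continuous_comp; [exact: cvg_snd | exact: coord_continuous].
Qed.

Lemma flow_is_action : is_action (flow a).
Proof.
split; first exact: flow0.
by split; [exact: flowD | split; [exact: continuous_flow | exact: smooth_flow]].
Qed.

End FlowSmooth.

Section FlowProper.
Variables (R : realType) (n : nat) (a : 'I_n -> R).
Local Notation H := (Hpt R n).

Definition wcoord_expr : sexpr R (n + n + 1) := locked
  (SAdd (SCoord (zc n))
        (SMul (SConst (- (1 / 2))) (SSum (fun i => SMul (SCoord (xc i)) (SCoord (yc i)))))).

Lemma seval_wcoord p : seval wcoord_expr p = wcoord p.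
Proof. by rewrite /wcoord_expr -lock /= /wcoord /cz /cx /cy; ring. Qed.

Lemma continuous_wcoord : continuous (@wcoord R n).
Proof.
have -> : @wcoord R n = seval wcoord_expr by apply: funext => p; rewrite seval_wcoord.
exact: continuous_seval.
Qed.

Lemma flow_proper : proper_action (flow a).
Proof.
move=> K cK; set g := fun q : R * H => (flow a q.1 q.2, q.2).
have gc : continuous g.
  move=> q; have hs : snd @ nbhs q --> nbhs q.2 by exact: cvg_snd.
  exact: (cvg_pair (@continuous_flow R n a q) hs).
have Kcl : closed K by apply: compact_closed => //; exact: norm_hausdorff.
have Pcl : closed (g @^-1` K) by apply: preimage_closed => // x _; exact: gc.
have cK2 : compact (snd @` K).
  by apply: continuous_compact => //; apply: continuous_subspaceT => x; exact: cvg_snd.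
have [B1 hB1] : exists B, forall x, K x -> `|wcoord x.1| <= B.
  apply: continuous_bounded_on_compact cK => x.
  by apply: continuous_comp; [exact: cvg_fst | exact: continuous_wcoord].
have [B2 hB2] : exists B, forall x, K x -> `|wcoord x.2| <= B.
  apply: continuous_bounded_on_compact cK => x.
  by apply: continuous_comp; [exact: cvg_snd | exact: continuous_wcoord].
have cI := @segment_compact R (- (B1 + B2)) (B1 + B2).
apply: (subclosed_compact Pcl (compact_setX cI cK2)).
move=> [t p] /= hK; split => /=; last by exists (flow a t p, p).
have -> : t = wcoord (flow a t p) - wcoord p by rewrite wcoord_flow; ring.
rewrite in_itv /= -ler_norml; apply: (le_trans (ler_normB _ _)).
by apply: lerD; [exact: (hB1 _ hK) | exact: (hB2 _ hK)].
Qed.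

End FlowProper.

Section QuotientMap.
Variables (R : realType) (n : nat) (a : 'I_n -> R).
Local Notation N := (n + n + 1)%N.
Local Notation H := (Hpt R n).

Definition rad2 (p : H) := \sum_k (cx p k ^+ 2 + cy p k ^+ 2).
Definition qscale (p : H) i := expR (a i / 2 * rad2 p).
Definition qangle (p : H) i := 2 * a i * wcoord p.
Definition qre (p : H) i :=
  qscale p i * (cx p i * cos (qangle p i) + cy p i * sin (qangle p i)).
Definition qim (p : H) i :=
  qscale p i * (cx p i * sin (qangle p i) - cy p i * cos (qangle p i)).

(* In complex notation [qmap p]_i = e^(a_i |p|^2 / 2) e^(2 i a_i w(p)) (x_i - i y_i),
   with [w = wcoord]. *)
Definition qmap (p : H) : 'rV[R]_(n + n) := row_mx (\row_i qre p i) (\row_i qim p i).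

Lemma qmap_re p i : qmap p ord0 (lshift n i) = qre p i.
Proof. by rewrite row_mxEl mxE. Qed.
Lemma qmap_im p i : qmap p ord0 (rshift n i) = qim p i.
Proof. by rewrite row_mxEr mxE. Qed.

Definition rad2_expr : sexpr R N := locked
  (SSum (fun k => SAdd (SMul (SCoord (xc k)) (SCoord (xc k)))
                       (SMul (SCoord (yc k)) (SCoord (yc k))))).
Definition qscale_expr i : sexpr R N := SExp (SMul (SConst (a i / 2)) rad2_expr).
Definition qangle_expr i : sexpr R N := SMul (SConst (2 * a i)) (wcoord_expr R n).
Definition qre_expr i : sexpr R N := SMul (qscale_expr i)
  (SAdd (SMul (SCoord (xc i)) (SCos (qangle_expr i)))
        (SMul (SCoord (yc i)) (SSin (qangle_expr i)))).
Definition qim_expr i : sexpr R N := SMul (qscale_expr i)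
  (SAdd (SMul (SCoord (xc i)) (SSin (qangle_expr i)))
        (SMul (SConst (-1)) (SMul (SCoord (yc i)) (SCos (qangle_expr i))))).
Definition qmap_expr (k : 'I_(n + n)) : sexpr R N :=
  match fintype.split k with inl i => qre_expr i | inr i => qim_expr i end.

Lemma seval_rad2 p : seval rad2_expr p = rad2 p.
Proof. by rewrite /rad2_expr -lock /= /rad2; apply: eq_bigr => k _; rewrite !expr2. Qed.

Lemma qmap_svec : qmap = svec qmap_expr.
Proof.
apply: funext => p; apply/matrixP => i j; rewrite (ord1 i).
case: (split_ordP j) => k ->; rewrite ?qmap_re ?qmap_im /svec mxE /qmap_expr;
  rewrite ?split_lshift ?split_rshift /= seval_rad2 seval_wcoord;
  by rewrite /qre /qim /qscale /qangle /cx /cy; ring.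
Qed.

Lemma smooth_qmap : smooth qmap.
Proof. by rewrite qmap_svec; exact: smooth_svec. Qed.

(* Derivatives of [rad2 / 2] and of [wcoord] at [p] along [v]. *)
Definition rad2_diff (p v : H) := \sum_k (cx p k * cx v k + cy p k * cy v k).
Definition wcoord_diff (p v : H) := cz v - (\sum_k (cx v k * cy p k + cx p k * cy v k)) / 2.

Lemma seval_deriv_rad2 v p : seval (sderiv v rad2_expr) p = 2 * rad2_diff p v.
Proof.
rewrite /rad2_expr -lock /= /rad2_diff mulr_sumr; apply: eq_bigr => k _.
by rewrite /cx /cy; ring.
Qed.

Lemma seval_deriv_wcoord v p : seval (sderiv v (wcoord_expr R n)) p = wcoord_diff p v.
Proof.
rewrite /wcoord_expr -lock /= /wcoord_diff /cz mul0r add0r; congr (_ + _).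
by rewrite /cx /cy; move: (\sum_(i < n) _) => S; field.
Qed.

Definition qre_diff (p v : H) i := qscale p i *
  (a i * rad2_diff p v * (cx p i * cos (qangle p i) + cy p i * sin (qangle p i))
   + (cx v i * cos (qangle p i) + cy v i * sin (qangle p i))
   + 2 * a i * wcoord_diff p v * (cy p i * cos (qangle p i) - cx p i * sin (qangle p i))).
Definition qim_diff (p v : H) i := qscale p i *
  (a i * rad2_diff p v * (cx p i * sin (qangle p i) - cy p i * cos (qangle p i))
   + (cx v i * sin (qangle p i) - cy v i * cos (qangle p i))
   + 2 * a i * wcoord_diff p v * (cx p i * cos (qangle p i) + cy p i * sin (qangle p i))).

Lemma derive_qmap_re p v i : 'D_v qmap p ord0 (lshift n i) = qre_diff p v i.
Proof.
rewrite qmap_svec derive_svec mxE /qmap_expr split_lshift [seval _ _]/=.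
rewrite seval_rad2 seval_deriv_rad2 seval_wcoord seval_deriv_wcoord.
by rewrite /qre_diff /qscale /qangle /cx /cy; field.
Qed.

Lemma derive_qmap_im p v i : 'D_v qmap p ord0 (rshift n i) = qim_diff p v i.
Proof.
rewrite qmap_svec derive_svec mxE /qmap_expr split_rshift [seval _ _]/=.
rewrite seval_rad2 seval_deriv_rad2 seval_wcoord seval_deriv_wcoord.
by rewrite /qim_diff /qscale /qangle /cx /cy; field.
Qed.

End QuotientMap.

Section QuotientMapDifferential.
Variables (R : realType) (n : nat) (a : 'I_n -> R).
Hypothesis a_ge0 : forall i, 0 <= a i.
Local Notation H := (Hpt R n).

Lemma JmapE (p v : H) :
  Jmap p v = hpt (cy v) (fun i => - cx v i) (\sum_i cy p i * cy v i).
Proof. by []. Qed.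

Lemma rad2_diff_Jmap (p v : H) : inD p v -> rad2_diff p (Jmap p v) = -2 * wcoord_diff p v.
Proof.
rewrite /inD /rad2_diff /wcoord_diff JmapE cx_hptE cy_hptE /=.
move=> /eqP; rewrite subr_eq0 => /eqP ->.
transitivity (\sum_i -2 * (cy p i * cx v i) + \sum_k (cx v k * cy p k + cx p k * cy v k)).
  by rewrite -big_split; apply: eq_bigr => i _ /=; ring.
by rewrite -mulr_sumr; field.
Qed.

Lemma wcoord_diff_Jmap (p v : H) : wcoord_diff p (Jmap p v) = rad2_diff p v / 2.
Proof.
rewrite /rad2_diff /wcoord_diff JmapE cx_hptE cy_hptE cz_hpt /=.
rewrite [\sum_k (_ + _)](eq_bigr (fun k => cy p k * cy v k - cx p k * cx v k)) => [|k _];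
  last by ring.
by rewrite sumrB big_split /=; field.
Qed.

Lemma qmap_CR (p v : H) : inD p v -> 'D_(Jmap p v) (qmap a) p = Jstd ('D_v (qmap a) p).
Proof.
move=> hD; apply/matrixP => i j; rewrite (ord1 i) /Jstd.
case: (split_ordP j) => k ->.
- rewrite derive_qmap_re row_mxEl [RHS]mxE [in RHS]mxE derive_qmap_im.
  rewrite /qre_diff /qim_diff rad2_diff_Jmap // wcoord_diff_Jmap JmapE cx_hpt cy_hpt.
  by field.
- rewrite derive_qmap_im row_mxEr [RHS]mxE derive_qmap_re.
  rewrite /qre_diff /qim_diff rad2_diff_Jmap // wcoord_diff_Jmap JmapE cx_hpt cy_hpt.
  by field.
Qed.

Section Lift.
Variables (p : H) (w : 'rV[R]_(n + n)).

Definition lift_re i :=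
  (w ord0 (lshift n i) * cos (qangle a p i) + w ord0 (rshift n i) * sin (qangle a p i))
  / qscale a p i.
Definition lift_im i :=
  (w ord0 (rshift n i) * cos (qangle a p i) - w ord0 (lshift n i) * sin (qangle a p i))
  / qscale a p i.
Definition lift_rad := (\sum_k (cx p k * lift_re k - cy p k * lift_im k)) / eta_den a p.
Definition lift_x i := lift_re i - a i * lift_rad * cx p i.
Definition lift_y i := - lift_im i - a i * lift_rad * cy p i.

Definition qmap_lift : H :=
  hpt lift_x lift_y ((\sum_k (lift_x k * cy p k + cx p k * lift_y k)) / 2).

Lemma wcoord_diff_lift : wcoord_diff p qmap_lift = 0.
Proof. by rewrite /wcoord_diff cz_hpt cx_hptE cy_hptE subrr. Qed.

Lemma rad2_diff_lift : rad2_diff p qmap_lift = lift_rad.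
Proof.
have hf := eta_den_neq0 a_ge0 p.
rewrite /rad2_diff cx_hptE cy_hptE.
rewrite (eq_bigr (fun k => (cx p k * lift_re k - cy p k * lift_im k)
                   - lift_rad * (a k * (cx p k ^+ 2 + cy p k ^+ 2)))) => [|k _];
  last by rewrite /lift_x /lift_y; ring.
rewrite sumrB.
have -> : \sum_k lift_rad * (a k * (cx p k ^+ 2 + cy p k ^+ 2)) =
          lift_rad * (eta_den a p - 1).
  by rewrite -mulr_sumr /eta_den addrAC subrr add0r.
by rewrite /lift_rad; field.
Qed.

Lemma qscale_lift k :
  qscale a p k * (lift_re k * cos (qangle a p k) - lift_im k * sin (qangle a p k))
    = w ord0 (lshift n k) /\
  qscale a p k * (lift_re k * sin (qangle a p k) + lift_im k * cos (qangle a p k))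
    = w ord0 (rshift n k).
Proof.
have := cos2Dsin2 (qangle a p k); have : qscale a p k != 0 by rewrite gt_eqF ?expR_gt0.
rewrite /lift_re /lift_im.
move: (cos _) (sin _) (qscale a p k) (w _ _) (w _ _) => c s E W U hE hcs.
split.
- by transitivity (U * (c ^+ 2 + s ^+ 2)); [field | rewrite hcs mulr1].
- by transitivity (W * (c ^+ 2 + s ^+ 2)); [field | rewrite hcs mulr1].
Qed.

Lemma derive_qmap_lift : 'D_qmap_lift (qmap a) p = w.
Proof.
apply/matrixP => i j; rewrite (ord1 i).
case: (split_ordP j) => k ->;
  rewrite ?derive_qmap_re ?derive_qmap_im /qre_diff /qim_diff;
  rewrite wcoord_diff_lift rad2_diff_lift cx_hpt cy_hpt /lift_x /lift_y.
- rewrite -(qscale_lift k).1; congr (_ * _); ring.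
- rewrite -(qscale_lift k).2; congr (_ * _); ring.
Qed.

End Lift.

Lemma qmap_submersion (p : H) (w : 'rV[R]_(n + n)) : exists v, 'D_v (qmap a) p = w.
Proof. by exists (qmap_lift p w); exact: derive_qmap_lift. Qed.

End QuotientMapDifferential.

Section QuotientMapFibres.
Variables (R : realType) (n : nat) (a : 'I_n -> R).
Hypothesis a_ge0 : forall i, 0 <= a i.
Local Notation H := (Hpt R n).

Lemma rad2_flow t (p : H) : rad2 (flow a t p) = rad2 p.
Proof.
rewrite /rad2 cx_flow cy_flow; apply: eq_bigr => i _.
exact/rotate_norm2/cos2Dsin2.
Qed.

Lemma qmap_flow t (p : H) : qmap a (flow a t p) = qmap a p.
Proof.
have hcs i := cos2Dsin2 (2 * a i * t).
apply/matrixP => i j; rewrite (ord1 i).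
have hq k : qscale a (flow a t p) k = qscale a p k by rewrite /qscale rad2_flow.
have ha k : qangle a (flow a t p) k = qangle a p k + 2 * a k * t.
  by rewrite /qangle wcoord_flow; ring.
case: (split_ordP j) => k ->; rewrite ?qmap_re ?qmap_im /qre /qim hq ha cx_flow cy_flow.
- by rewrite /= cosD sinD rotate_re.
- by rewrite /= cosD sinD rotate_im.
Qed.

Definition rad2_at (p : H) i := cx p i ^+ 2 + cy p i ^+ 2.

Lemma qmap_norm2 (p : H) i :
  qre a p i ^+ 2 + qim a p i ^+ 2 = rad2_at p i * expR (a i * rad2 p).
Proof.
have -> : expR (a i * rad2 p) = qscale a p i * qscale a p i.
  by rewrite /qscale -expRD; congr expR; field.
rewrite /qre /qim /rad2_at -[RHS]mulr1 -(cos2Dsin2 (qangle a p i)); ring.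
Qed.

(* With the moduli [rad2_at _ i * expR (a i * rad2 _)] fixed, a larger [rad2]
   forces every [rad2_at _ i] down, since [a i >= 0]. *)
Lemma rad2_le_of_norm2 (p q : H) :
  (forall i, rad2_at p i * expR (a i * rad2 p) = rad2_at q i * expR (a i * rad2 q)) ->
  rad2 p <= rad2 q -> rad2 q <= rad2 p.
Proof.
move=> hm hle; apply: ler_sum => i _.
rewrite -[cx q i ^+ 2 + _]/(rad2_at q i) -[cx p i ^+ 2 + _]/(rad2_at p i).
have -> : rad2_at p i = rad2_at q i * expR (a i * rad2 q - a i * rad2 p).
  by rewrite expRB mulrA -hm mulfK // expR_eq0.
apply: ler_peMr; first by rewrite addr_ge0 // sqr_ge0.
apply: le_trans (expR_ge1Dx _); rewrite lerDl subr_ge0.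
exact: ler_wpM2l.
Qed.

Lemma qmap_rad2 (p q : H) : qmap a p = qmap a q -> rad2 p = rad2 q.
Proof.
move=> hpq.
have hm i : rad2_at p i * expR (a i * rad2 p) = rad2_at q i * expR (a i * rad2 q).
  by rewrite -!qmap_norm2 -!qmap_re -!qmap_im hpq.
case/orP: (le_total (rad2 p) (rad2 q)) => h; apply/eqP; rewrite eq_le h ?andbT /=.
- exact: rad2_le_of_norm2.
- by apply: rad2_le_of_norm2 => // i; rewrite hm.
Qed.

Lemma qmap_fibre (p q : H) : qmap a p = qmap a q -> q = flow a (wcoord q - wcoord p) p.
Proof.
move=> hpq; set t := wcoord q - wcoord p.
have hE i : qscale a p i = qscale a q i by rewrite /qscale (qmap_rad2 hpq).
have hE0 i : qscale a p i != 0 by rewrite gt_eqF ?expR_gt0.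
have hre i : cx p i * cos (qangle a p i) + cy p i * sin (qangle a p i) =
             cx q i * cos (qangle a q i) + cy q i * sin (qangle a q i).
  apply: (mulfI (hE0 i)); rewrite -[LHS]/(qre a p i) hE -[RHS]/(qre a q i).
  by rewrite -!qmap_re hpq.
have him i : cx p i * sin (qangle a p i) - cy p i * cos (qangle a p i) =
             cx q i * sin (qangle a q i) - cy q i * cos (qangle a q i).
  apply: (mulfI (hE0 i)); rewrite -[LHS]/(qim a p i) hE -[RHS]/(qim a q i).
  by rewrite -!qmap_im hpq.
have hang i : 2 * a i * t = qangle a q i - qangle a p i by rewrite /qangle /t; ring.
have hx i : rot_x a p i t = cx q i.
  by rewrite /rot_x hang; exact/esym/(rotate_back (hre i) (him i)).1.
have hy i : rot_y a p i t = cy q i.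
  by rewrite /rot_y hang; exact/esym/(rotate_back (hre i) (him i)).2.
apply: hptP => [i|i|]; rewrite ?cx_flow ?cy_flow ?hx ?hy // cz_hpt.
under eq_bigr do rewrite hx hy.
by rewrite /t /wcoord; ring.
Qed.

End QuotientMapFibres.

Section QuotientMapSurjective.
Variables (R : realType) (n : nat) (a : 'I_n -> R).
Hypothesis a_ge0 : forall i, 0 <= a i.
Local Notation H := (Hpt R n).

Lemma qmap_surj (w : 'rV[R]_(n + n)) : exists p : H, qmap a p = w.
Proof.
pose U i := w ord0 (lshift n i); pose W i := w ord0 (rshift n i).
have [S hS] := exists_fixpoint_sum_expR a_ge0
  (fun i => addr_ge0 (sqr_ge0 (U i)) (sqr_ge0 (W i))).
pose e i := expR (- (a i / 2 * S)).
pose x i := U i * e i; pose y i := - (W i * e i).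
pose p : H := hpt x y ((\sum_i x i * y i) / 2).
have hw : wcoord p = 0 by rewrite /wcoord cz_hpt cx_hptE cy_hptE subrr.
have hal i : qangle a p i = 0 by rewrite /qangle hw mulr0.
have hR : rad2 p = S.
  rewrite /rad2 [RHS]hS cx_hptE cy_hptE; apply: eq_bigr => i _.
  have -> : expR (- (a i * S)) = e i ^+ 2 by rewrite /e expr2 -expRD; congr expR; field.
  by rewrite /x /y; ring.
have hq i : qscale a p i * e i = 1 by rewrite /qscale hR /e expRxMexpNx_1.
exists p; apply/matrixP => i j; rewrite (ord1 i).
case: (split_ordP j) => k ->;
  rewrite ?qmap_re ?qmap_im /qre /qim hal cos0 sin0 cx_hpt cy_hpt.
- by rewrite /x mulr0 addr0 mulr1 mulrCA hq mulr1.
- by rewrite /y mulr0 sub0r mulr1 opprK mulrCA hq mulr1.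
Qed.

End QuotientMapSurjective.

Theorem lemma6p3 (R : realType) (n : nat) (a : 'I_n -> R)
  (ha : forall i, 0 <= a i) (xi : Hpt R n -> Hpt R n) (hxi : is_Reeb a xi) :
  exists phi : R -> Hpt R n -> Hpt R n,
    [/\ is_flow_of xi phi, is_action phi, free_action phi, proper_action phi
      & quotient_biholo_Cn phi].
Proof.
exists (flow a); split.
- exact: flow_is_flow_of ha hxi.
- exact: flow_is_action.
- by move=> t p; apply: flow_free.
- exact: flow_proper.
exists (qmap a); split.
- exact: smooth_qmap.
- by move=> w; apply: qmap_surj ha w.
- move=> p q; split=> [hpq|[t ->]]; last by rewrite qmap_flow.
  by exists (wcoord q - wcoord p); exact: (qmap_fibre ha hpq).
- by move=> p w; apply: qmap_submersion ha p w.
- by move=> p v hv; apply: qmap_CR hv.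
Qed.
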